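(* Let $3\le m\le n$ and $r=m-1$. Then $\mathrm{Hrk}^\circ_{m-1}(m,n)=\mathrm{Hrk}^{\max}_{m-1}(m,n)=2$.
   Context: Work over $\mathbb{C}$. $A\star B$ denotes the entrywise (Hadamard) product of matrices, and for projective varieties $X,Y\subset\mathbb{P}^N$, $X\star Y$ is the Zariski closure of the set of entrywise products $p\star q$ ($p\in X,q\in Y$, $p\star q$ not the zero vector); $X^{\star1}=X$, $X^{\star s}=X\star X^{\star(s-1)}$. $X_r\subset\mathbb{P}(\mathrm{Mat}_{m,n})$ is the variety of $m\times n$ matrices of rank at most $r$. For a matrix $M$, $\mathrm{Hrk}_r(M)=\min\{s\mid M=A_1\star\cdots\star A_s,\ \mathrm{rk}(A_i)\le r\}$. $\mathrm{Hrk}_r^\circ(m,n)=\min\{s\mid X_r^{\star s}=\mathbb{P}(\mathrm{Mat}_{m,n})\}$ and $\mathrm{Hrk}_r^{\max}(m,n)=\max\{\mathrm{Hrk}_r(M)\mid M\in\mathrm{Mat}_{m,n}\}$. *)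

(* Base field: algC (algebraically closed, char 0), standing for C. *)
From HB Require Import structures.
From mathcomp Require Import all_boot all_order all_algebra all_field.
Unset Printing Implicit Defensive.
Import GRing.Theory Num.Theory.
Local Open Scope ring_scope.

Definition hadamard {m n : nat} (A B : 'M[algC]_(m, n)) : 'M[algC]_(m, n) :=
  \matrix_(i, j) (A i j * B i j).

Inductive mpoly (V : Type) : Type :=
| MConst of algC
| MVar of V
| MAdd of mpoly V & mpoly V
| MMul of mpoly V & mpoly V.
Arguments MConst {V}. Arguments MVar {V}. Arguments MAdd {V}. Arguments MMul {V}.

Fixpoint meval {V : Type} (p : mpoly V) (e : V -> algC) : algC :=
  match p with
  | MConst c => c
  | MVar v => e v
  | MAdd p q => meval p e + meval q e
  | MMul p q => meval p e * meval q e
  end.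

Definition mxpoly_eval {m n : nat} (p : mpoly ('I_m * 'I_n)) (M : 'M[algC]_(m, n)) : algC :=
  meval p (fun ij => M ij.1 ij.2).

(* Zariski closure of a subset of Mat_{m,n} (affine space). Projective varieties
   of P(Mat_{m,n}) are represented by their affine cones. *)
Definition zclosure {m n : nat} (S : 'M[algC]_(m, n) -> Prop) : 'M[algC]_(m, n) -> Prop :=
  fun M => forall p : mpoly ('I_m * 'I_n),
    (forall A, S A -> mxpoly_eval p A = 0) -> mxpoly_eval p M = 0.

(* Affine cone over X_r: matrices of rank at most r. *)
Definition rankvar (m n r : nat) : 'M[algC]_(m, n) -> Prop :=
  fun A => (\rank A <= r)%N.

Definition hstar {m n : nat} (X Y : 'M[algC]_(m, n) -> Prop) : 'M[algC]_(m, n) -> Prop :=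
  zclosure (fun M => exists A B, [/\ X A, Y B, hadamard A B != 0 & M = hadamard A B]).

Fixpoint Xstar (m n r : nat) (s : nat) : 'M[algC]_(m, n) -> Prop :=
  match s with
  | 0 => rankvar m n r            (* s = 0 never used: Hrk ranges over s >= 1 *)
  | 1 => rankvar m n r
  | s'.+1 => hstar (rankvar m n r) (Xstar m n r s')
  end.

Definition is_least (P : nat -> Prop) (k : nat) : Prop :=
  [/\ (0 < k)%N, P k & forall s, (0 < s)%N -> (s < k)%N -> ~ P s].

Definition hdecomp {m n : nat} (r s : nat) (M : 'M[algC]_(m, n)) : Prop :=
  exists As : 'I_s -> 'M[algC]_(m, n),
    (forall i, (\rank (As i) <= r)%N) /\
    M = \big[hadamard / const_mx 1]_(i < s) As i.

Definition Hrk_is {m n : nat} (r : nat) (M : 'M[algC]_(m, n)) (k : nat) : Prop :=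
  is_least (fun s => hdecomp r s M) k.

Definition Hrk_gen_is (m n r k : nat) : Prop :=
  is_least (fun s => forall M : 'M[algC]_(m, n), Xstar m n r s M) k.

Definition Hrk_max_is (m n r k : nat) : Prop :=
  [/\ forall M : 'M[algC]_(m, n), exists s, Hrk_is r M s,
      forall (M : 'M[algC]_(m, n)) s, Hrk_is r M s -> (s <= k)%N
    & exists M : 'M[algC]_(m, n), Hrk_is r M k].

From mathcomp Require Import all_boot all_order all_algebra all_field.
From mathcomp Require Import ring zify.
Import GRing.Theory Num.Theory.
Local Open Scope ring_scope.

(* Matrices of rank at most m - 1 miss the full-rank matrix pid_mx m, so two
   factors are needed somewhere. Two always suffice: in each column, the first
   three entries c0, c1, c2 factor as a_i * b_i with a0 + a1 + a2 = 0 and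
   b0 + b1 + b2 = 0 (a quadratic equation over C); completing A by the remaining
   rows of M and B by ones, the row vector (1, 1, 1, 0, ..., 0) annihilates both
   A and B, so both have rank at most m - 1. Since the variety X_r * X_r is only
   the closure of the nonzero products, the zero matrix is recovered by
   restricting a vanishing polynomial to the line of scalar matrices. *)

Lemma zero_sum_factors3_scalar {R : numClosedFieldType} (c0 c1 c2 : R) :
  exists a0 a1 a2 b0 b1 b2 : R,
    [/\ a0 + a1 + a2 = 0, b0 + b1 + b2 = 0,
        a0 * b0 = c0, a1 * b1 = c1 & a2 * b2 = c2].
Proof.
have [-> | c0n0] := eqVneq c0 0.
  by exists 0, 1, (-1), (c2 - c1), c1, (- c2); split; ring.
have [-> | c1n0] := eqVneq c1 0.
  by exists 1, 0, (-1), c0, (c2 - c0), (- c2); split; ring.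
have [-> | c2n0] := eqVneq c2 0.
  by exists 1, (-1), 0, c0, (- c1), (c1 - c0); split; ring.
pose B := c0 + c1 - c2.
(* t is a root of c0 t^2 + B t + c1, i.e. of c0 + c1 / t - c2 / (1 + t) = 0
   with the denominators cleared. *)
pose t := (sqrtC (B ^+ 2 - 4 * c0 * c1) - B) / (2 * c0).
have t_root : c0 * t ^+ 2 + B * t + c1 = 0.
  have -> : c0 * t ^+ 2 + B * t + c1 =
      (sqrtC (B ^+ 2 - 4 * c0 * c1) ^+ 2 - (B ^+ 2 - 4 * c0 * c1)) / (4 * c0).
    by rewrite /t; field.
  by rewrite sqrtCK subrr mul0r.
clearbody t.
have t_neq0 : t != 0.
  by apply: contraNneq c1n0 => t0; apply/eqP; rewrite -t_root t0; ring.
have t1_neq0 : 1 + t != 0.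
  apply: contraNneq c2n0 => t1; apply/eqP; rewrite -t_root.
  by rewrite (_ : t = -1) /B; [ring | rewrite -[t](addKr 1) t1 addr0].
exists 1, t, (-1 - t), c0, (c1 / t), (- c2 / (1 + t)); split.
- ring.
- have -> : c0 + c1 / t + - c2 / (1 + t) = (c0 * t ^+ 2 + B * t + c1) / (t * (1 + t)).
    by rewrite /B; field; rewrite t_neq0 t1_neq0.
  by rewrite t_root mul0r.
- ring.
- by field.
- by field.
Qed.

Lemma zero_sum_factors3 {R : numClosedFieldType} (c : 'I_3 -> R) :
  exists a b : 'I_3 -> R,
    [/\ \sum_i a i = 0, \sum_i b i = 0 & forall i, a i * b i = c i].
Proof.
have [a0 [a1 [a2 [b0 [b1 [b2 [sum_a sum_b ab0 ab1 ab2]]]]]]] :=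
  zero_sum_factors3_scalar (c ord0) (c (inord 1)) (c (inord 2)).
exists (fun i => [:: a0; a1; a2]`_i), (fun i => [:: b0; b1; b2]`_i); split.
- by rewrite !big_ord_recr big_ord0 /= add0r.
- by rewrite !big_ord_recr big_ord0 /= add0r.
- case=> [[|[|[|//]]] lt_i3] /=.
  + by rewrite ab0; congr c; apply: val_inj.
  + by rewrite ab1; congr c; apply: val_inj; rewrite /= inordK.
  + by rewrite ab2; congr c; apply: val_inj; rewrite /= inordK.
Qed.

Lemma mxrank_lt_of_mulmx0 {F : fieldType} {m n} (u : 'rV[F]_m) (A : 'M[F]_(m, n)) :
  u != 0 -> u *m A = 0 -> (\rank A < m)%N.
Proof.
move=> u_neq0 /sub_kermxP/mxrankS; rewrite mxrank_ker rank_rV u_neq0.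
by move: (rank_leq_row A); lia.
Qed.

Lemma mxrank_col_mx_leq {F : fieldType} {m1 m2 n} (A : 'M[F]_(m1, n)) (B : 'M[F]_(m2, n)) :
  (\rank (col_mx A B) <= \rank A + \rank B)%N.
Proof. by rewrite -addsmxE; exact: mxrank_adds_leqif. Qed.

Lemma poly_eq0_of_roots_neq0 {R : numDomainType} (q : {poly R}) :
  (forall t, t != 0 -> root q t) -> q = 0.
Proof.
move=> q_root; pose rs := [seq i.+1%:R : R | i <- iota 0 (size q)].
apply: (@roots_geq_poly_eq0 _ _ rs); last by rewrite size_map size_iota.
- by apply/allP => _ /mapP[i _ ->]; apply: q_root; rewrite pnatr_eq0.
- by rewrite map_inj_uniq ?iota_uniq // => i j /eqP; rewrite eqr_nat => /eqP[].
Qed.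

Lemma is_least1 {P : nat -> Prop} : P 1%N -> is_least P 1.
Proof. by move=> P1; split => // [[|]]. Qed.

Lemma is_least2 {P : nat -> Prop} : P 2%N -> ~ P 1%N -> is_least P 2.
Proof. by move=> P2 notP1; split => // [[|[|]]]. Qed.

Lemma is_least_leq {P : nat -> Prop} {k s : nat} : is_least P k -> (0 < s)%N -> P s -> (k <= s)%N.
Proof. by case=> _ _ Pmin s_gt0 Ps; rewrite leqNgt; apply/negP => /(Pmin s s_gt0). Qed.

Lemma hadamardmx1 {m n} (A : 'M[algC]_(m, n)) : hadamard A (const_mx 1) = A.
Proof. by apply/matrixP => i j; rewrite !mxE mulr1. Qed.

Lemma hadamard_col_mx {m1 m2 n} (A1 B1 : 'M[algC]_(m1, n)) (A2 B2 : 'M[algC]_(m2, n)) :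
  hadamard (col_mx A1 A2) (col_mx B1 B2) = col_mx (hadamard A1 B1) (hadamard A2 B2).
Proof.
by apply/matrixP => i j; rewrite !mxE; case: (split i) => k; rewrite !mxE.
Qed.

Lemma hadamard_zero_sum_rows3 {n} (C : 'M[algC]_(3, n)) :
  exists A B : 'M[algC]_(3, n),
    [/\ const_mx 1 *m A = 0 :> 'rV_n, const_mx 1 *m B = 0 :> 'rV_n & hadamard A B = C].
Proof.
have /fin_all_exists [a ha] := fun j => zero_sum_factors3 (fun i => C i j).
have [b /all_and3 [sum_a sum_b ab]] := fin_all_exists ha.
exists (\matrix_(i, j) a j i), (\matrix_(i, j) b j i); split.
- by apply/rowP => j; rewrite !mxE -[RHS](sum_a j); apply: eq_bigr => i _; rewrite !mxE mul1r.
- by apply/rowP => j; rewrite !mxE -[RHS](sum_b j); apply: eq_bigr => i _; rewrite !mxE mul1r.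
- by apply/matrixP => i j; rewrite !mxE ab.
Qed.

Lemma hadamard_factor_corank1 {k n} (M : 'M[algC]_(k.+3, n)) :
  exists A B : 'M[algC]_(k.+3, n),
    [/\ (\rank A <= k.+2)%N, (\rank B <= k.+2)%N & hadamard A B = M].
Proof.
have [A [B [sum_A sum_B AB]]] := hadamard_zero_sum_rows3 (usubmx (M : 'M_(3 + k, n))).
have rank_lt3 (X : 'M[algC]_(3, n)) : const_mx 1 *m X = 0 :> 'rV_n -> (\rank X <= 2)%N.
  apply: mxrank_lt_of_mulmx0; apply/eqP => /rowP/(_ ord0); rewrite !mxE.
  exact/eqP/oner_neq0.
have rank_stack (X : 'M[algC]_(3, n)) (Y : 'M[algC]_(k, n)) :
    (\rank X <= 2)%N -> (\rank (col_mx X Y) <= k.+2)%N.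
  move=> rX; apply: leq_trans (mxrank_col_mx_leq X Y) _.
  by apply: leq_trans (leq_add rX (rank_leq_row Y)) _; rewrite add2n.
exists (col_mx A (dsubmx (M : 'M_(3 + k, n)))), (col_mx B (const_mx 1)); split.
- exact/rank_stack/rank_lt3.
- exact/rank_stack/rank_lt3.
- by have := hadamard_col_mx A B (dsubmx (M : 'M_(3 + k, n))) (const_mx 1);
    rewrite AB hadamardmx1 vsubmxK.
Qed.

Lemma hdecomp1P {m n} r (M : 'M[algC]_(m, n)) : hdecomp r 1 M <-> (\rank M <= r)%N.
Proof.
split => [[As [As_r ->]] | M_r]; first by rewrite big_ord_recl big_ord0 hadamardmx1.
by exists (fun=> M); rewrite big_ord_recl big_ord0 hadamardmx1.
Qed.

Lemma hdecomp2_hadamard {m n} r (A B : 'M[algC]_(m, n)) :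
  (\rank A <= r)%N -> (\rank B <= r)%N -> hdecomp r 2 (hadamard A B).
Proof.
move=> A_r B_r; exists (fun i : 'I_2 => if val i == 0%N then A else B); split.
  by move=> i; case: ifP.
by rewrite big_ord_recl big_ord_recl big_ord0 hadamardmx1.
Qed.

Fixpoint diag_poly {V : Type} (p : mpoly V) : {poly algC} :=
  match p with
  | MConst c => c%:P
  | MVar _ => 'X
  | MAdd p q => diag_poly p + diag_poly q
  | MMul p q => diag_poly p * diag_poly q
  end.

Lemma mxpoly_eval_const {m n} (p : mpoly ('I_m * 'I_n)) (t : algC) :
  mxpoly_eval p (const_mx t) = (diag_poly p).[t].
Proof.
rewrite /mxpoly_eval; elim: p => [c | v | p IHp q IHq | p IHp q IHq] /=.
- by rewrite hornerC.
- by rewrite mxE hornerX.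
- by rewrite hornerD IHp IHq.
- by rewrite hornerM IHp IHq.
Qed.

Lemma zclosure_of_nonzero {m n} (S : 'M[algC]_(m.+1, n.+1) -> Prop) :
  (forall A, A != 0 -> S A) -> forall M, zclosure S M.
Proof.
move=> S_nz M p p_S; have [-> | /S_nz /p_S //] := eqVneq M 0.
have -> : (0 : 'M[algC]_(m.+1, n.+1)) = const_mx 0 by apply/matrixP => i j; rewrite !mxE.
rewrite mxpoly_eval_const (@poly_eq0_of_roots_neq0 _ (diag_poly p)) ?horner0 //.
move=> t t_neq0; apply/eqP; rewrite -mxpoly_eval_const; apply: p_S; apply: S_nz.
by apply: contraNneq t_neq0 => /matrixP/(_ ord0 ord0); rewrite !mxE => ->.
Qed.

Theorem proposition4p17 (m n : nat) (h3 : (3 <= m)%N) (hmn : (m <= n)%N) :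
  Hrk_gen_is m n (m - 1) 2 /\ Hrk_max_is m n (m - 1) 2.
Proof.
case: m h3 hmn => [|[|[|k]]] // _; rewrite subn1 /=.
case: n => [|n] // k3_le_n.
have hdecomp2_all (M : 'M[algC]_(k.+3, n.+1)) : hdecomp k.+2 2 M.
  by have [A [B [A_r B_r <-]]] := hadamard_factor_corank1 M; exact: hdecomp2_hadamard.
have pid_not_rank_le : ~~ (\rank (pid_mx k.+3 : 'M[algC]_(k.+3, n.+1)) <= k.+2)%N.
  by rewrite rank_pid_mx // ltnn.
split.
- apply: is_least2 => [M | /(_ (pid_mx k.+3))]; last exact/negP.
  apply: zclosure_of_nonzero => {}M M_neq0.
  have [A [B [A_r B_r AB]]] := hadamard_factor_corank1 M.
  by exists A, B; rewrite AB.
- split=> [M | M s Hrk_s | ].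
  + have [M_r | M_not_r] := boolP (\rank M <= k.+2)%N.
      by exists 1%N; apply/is_least1/hdecomp1P.
    by exists 2%N; apply: is_least2 (hdecomp2_all M) _ => /hdecomp1P; apply/negP.
  + exact: is_least_leq Hrk_s _ (hdecomp2_all M).
  + exists (pid_mx k.+3); apply: is_least2 (hdecomp2_all _) _ => /hdecomp1P.
    exact/negP.
Qed.
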